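(* Let $A=\{1,2,3\}\cup\{5\cdot 2^i : i\ge 0\}=\{1,2,3,5,10,20,40,\dots\}$. Then for every $n\ge 1$, $\mathrm{Total}(n,A)=\lfloor 5\cdot 2^{n-2}-1\rfloor$ (i.e., the values are $1,4,9,19,39,79,\dots$).
   Context: For an integer $n\ge 0$ and a set $A$ of positive integers with $1\in A$, the abstract generalized 2048 game $\mathrm{AGG}(n,A)$ is played on $n$ indistinguishable cells. A position assigns to each cell either nothing (empty) or a tile with a value in $A$; the initial position has all cells empty. A step, performable from any position with at least one empty cell, consists of: (i) placing a new tile of value $1$ into a chosen empty cell; then (ii) optionally choosing pairwise disjoint sets of nonempty cells, each with tile-value sum in $A$, and merging each set into a single tile of that sum placed in one of its cells, the other cells of the set becoming empty. The game ends when after a step all cells are nonempty. A position is reachable if obtainable from the initial position by finitely many steps; its total value is the sum of its tile values. $\mathrm{Total}(n,A)$ is the supremum of total values of reachable positions of $\mathrm{AGG}(n,A)$. *)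

From mathcomp Require Import all_boot.
Set Implicit Arguments. Unset Strict Implicit. Unset Printing Implicit Defensive.

(* A position of AGG(n,A) on indistinguishable cells is the multiset of tile
   values, represented as a sequence (order irrelevant); the number of empty
   cells is n - size p. *)

(* Tiles left alone are
   singleton groups (their value is already in A). *)
Definition agg_step (n : nat) (A : nat -> Prop) (p q : seq nat) : Prop :=
  size p < n /\
  exists groups : seq (seq nat),
    [/\ perm_eq (flatten groups) (1 :: p),
        forall g, g \in groups -> g <> [::],
        forall g, g \in groups -> A (sumn g)
      & q = map sumn groups].

Inductive agg_reachable (n : nat) (A : nat -> Prop) : seq nat -> Prop :=
| agg_reach_init : agg_reachable n A [::]
| agg_reach_step p q : agg_reachable n A p -> agg_step n A p q ->
                       agg_reachable n A q.

Definition agg_Total_is (n : nat) (A : nat -> Prop) (V : nat) : Prop :=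
  (forall p, agg_reachable n A p -> sumn p <= V) /\
  (exists p, agg_reachable n A p /\ sumn p = V).

Definition A_1235 (a : nat) : Prop :=
  a = 1 \/ a = 2 \/ a = 3 \/ exists i, a = 5 * 2 ^ i.

(* Let m_0, m_1, m_2, ... = 1, 3, 5, 10, 20, ... and let s_j be the least
   element of A above m_j; then m_0 + ... + m_j < s_j.  In a reachable
   position on n cells, for every j < n at most n-1-j tiles exceed m_j.
   This survives a step: truncate tiles at s_j.  Merging does not increase
   the truncated sum, a merged tile above m_j is at least s_j, and before
   the merge the invariant caps the truncated sum by
   (n-j) m_j + (m_0 + ... + m_{j-1}) + (n-1-j)(s_j - m_j) < (n-j) s_j.
   For j = n-1 every tile is at most m_{n-1}, so the total is at most
   m_0 + ... + m_{n-1} = floor(5 * 2^(n-2)) - 1.  The bound is attained by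
   the tiles m_{n-1}, ..., m_0: for n >= 3, merge m_{n-2}, ..., m_0 with a
   new 1 into m_{n-1}, then rebuild m_{n-2}, ..., m_0 in the other cells. *)

From mathcomp Require Import all_boot zify.
From Stdlib Require Import Relations.

Set Implicit Arguments.
Unset Strict Implicit.
Unset Printing Implicit Defensive.

Fixpoint ladder (m : nat -> nat) (k : nat) : seq nat :=
  if k is k'.+1 then m k' :: ladder m k' else [::].

Lemma size_ladder m k : size (ladder m k) = k.
Proof. by elim: k => //= k ->. Qed.

Lemma leq_minn_split (x m s : nat) :
  m <= s -> minn x s <= minn x m + (m < x) * (s - m).
Proof. by case: (ltnP m x) => /= ? ?; lia. Qed.

Lemma leq_sum_minn_split (X : seq nat) m s : m <= s ->
  \sum_(x <- X) minn x s <=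
  \sum_(x <- X) minn x m + count (fun x => m < x) X * (s - m).
Proof.
move=> le_ms; elim: X => [|x X IH]; first by rewrite !big_nil.
rewrite !big_cons /= mulnDl; have := leq_minn_split x le_ms; lia.
Qed.

Lemma leq_minn_sumn (g : seq nat) c : minn (sumn g) c <= \sum_(x <- g) minn x c.
Proof. by elim: g => [|x g IH]; rewrite ?big_nil ?big_cons //=; lia. Qed.

Lemma leq_sum_minn_merge (G : seq (seq nat)) (X : seq nat) c :
  perm_eq (flatten G) X ->
  \sum_(y <- map sumn G) minn y c <= \sum_(x <- X) minn x c.
Proof.
move=> pGX; rewrite -(perm_big _ pGX) big_flatten big_map /=.
by apply: leq_sum => g _; apply: leq_minn_sumn.
Qed.

Lemma leq_size_flatten (G : seq (seq nat)) :
  (forall g, g \in G -> g <> [::]) -> size G <= size (flatten G).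
Proof.
elim: G => [//|g G IH] neG /=; rewrite size_cat.
have := neG g (mem_head _ _).
have := IH (fun h hG => neG h (mem_behead (s := g :: G) hG)).
by case: g {neG} => [|x g] /= sizeG ne_g; [case: ne_g | lia].
Qed.

Lemma leq_count_gap k a c S m s :
  S + m < s -> a <= k -> c * s <= k.+1 * m + S + a * (s - m) -> c <= k.
Proof.
move=> gap le_ak le_cs; rewrite leqNgt; apply/negP => lt_kc.
have : k.+1 * s <= c * s by rewrite leq_mul2r lt_kc orbT.
have : a * (s - m) <= k * (s - m) by rewrite leq_mul2r le_ak orbT.
have split_s : k.+1 * s = k.+1 * m + k * (s - m) + (s - m).
  by rewrite -addnA -mulSnr -mulnDr subnKC //; lia.
lia.
Qed.

Section LadderBound.

Variables (A : nat -> Prop) (m s : nat -> nat).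
Hypothesis m0_gt0 : 0 < m 0.
Hypothesis m_incr : forall j, m j <= m j.+1.
Hypothesis s_least : forall j x, A x -> m j < x -> s j <= x.
Hypothesis s_gap : forall j, sumn (ladder m j) + m j < s j.

Definition ladder_dominated (n : nat) (X : seq nat) : Prop :=
  size X <= n /\ forall j, j < n -> count (fun x => m j < x) X <= n - j.+1.

Lemma m_gt0 j : 0 < m j.
Proof. by elim: j => // j; have := m_incr j; lia. Qed.

Lemma leq_sum_minn_dominated n X j : ladder_dominated n X -> j < n ->
  \sum_(x <- X) minn x (m j) <= (n - j) * m j + sumn (ladder m j).
Proof.
case=> size_X count_X; elim: j => [|j IH] lt_jn.
  have : \sum_(x <- X) minn x (m 0) <= size X * m 0.
    rewrite -sum1_size big_distrl; apply: leq_sum => x _.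
    by rewrite /= mul1n geq_minr.
  by have := leq_mul size_X (leqnn (m 0)); rewrite /=; lia.
have le_count := leq_mul (count_X j (ltnW lt_jn)) (leqnn (m j.+1 - m j)).
have := leq_sum_minn_split X (m_incr j); have := IH (ltnW lt_jn); rewrite /=.
have := m_incr j; nia.
Qed.

Lemma leq_count_gt_sum_minn j (q : seq nat) : {in q, forall y, A y} ->
  count (fun y => m j < y) q * s j <= \sum_(y <- q) minn y (s j).
Proof.
elim: q => [//|y q IH] Aq; rewrite big_cons /= mulnDl.
have := IH (fun z zq => Aq z (mem_behead (s := y :: q) zq)).
case: (ltnP (m j) y) => [lt_my|_] /=; last by lia.
have := s_least (Aq y (mem_head _ _)) lt_my; lia.
Qed.

Lemma agg_step_dominated n p q :
  ladder_dominated n p -> agg_step n A p q -> ladder_dominated n q.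
Proof.
move=> [size_p count_p] [lt_pn [G [pG neG AG ->]]].
have dom_1p : ladder_dominated n (1 :: p).
  by split=> // j lt_jn /=; have := m_gt0 j; have := count_p j lt_jn; lia.
split; first by rewrite size_map (leq_trans (leq_size_flatten neG)) ?(perm_size pG).
move=> j lt_jn.
have Aq : {in map sumn G, forall y, A y} by move=> y /mapP [g gG ->]; apply: AG.
have le_ms : m j <= s j by have := s_gap j; lia.
apply: (leq_count_gap (s_gap j) (dom_1p.2 j lt_jn)).
rewrite (_ : (n - j.+1).+1 = n - j); last by lia.
apply: leq_trans (leq_count_gt_sum_minn j Aq) _.
apply: leq_trans (leq_sum_minn_merge (s j) pG) _.
apply: leq_trans (leq_sum_minn_split _ le_ms) _.
by rewrite leq_add2r; apply: leq_sum_minn_dominated.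
Qed.

Lemma agg_reachable_dominated n p : agg_reachable n A p -> ladder_dominated n p.
Proof. by elim=> [|{}p q _ dom_p]; [split | apply: agg_step_dominated]. Qed.

Lemma leq_sumn_dominated n X : ladder_dominated n.+1 X -> sumn X <= sumn (ladder m n.+1).
Proof.
move=> domX; have := leq_sum_minn_dominated domX (ltnSn n).
have /hasPn le_Xm : ~~ has (fun x => m n < x) X.
  by rewrite has_count -leqNgt (leq_trans (domX.2 n (ltnSn n))) ?subnn.
rewrite sumnE (eq_big_seq id) => [|x /le_Xm]; last by rewrite /= -leqNgt => /minn_idPl.
by rewrite -!sumnE subSnn mul1n.
Qed.

Lemma leq_sumn_agg_reachable n p :
  agg_reachable n.+1 A p -> sumn p <= sumn (ladder m n.+1).
Proof. by move/agg_reachable_dominated/leq_sumn_dominated. Qed.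

End LadderBound.

Section Construction.

Variable A : nat -> Prop.

Definition agg_steps (n : nat) : seq nat -> seq nat -> Prop :=
  clos_refl_trans (seq nat) (agg_step n A).

Lemma agg_reachable_steps n p q :
  agg_reachable n A p -> agg_steps n p q -> agg_reachable n A q.
Proof.
move=> reach_p steps; elim: steps reach_p => [{}p {}q step|//|p' q' r _ IHpq _ IHqr].
  by move/agg_reach_step; apply.
by move/IHpq/IHqr.
Qed.

Lemma agg_step_merge_all n p :
  size p < n -> A (sumn p).+1 -> agg_step n A p [:: (sumn p).+1].
Proof.
move=> lt_pn Ap; split=> //; exists [:: 1 :: p].
by split=> [|g|g|]; rewrite /= ?inE ?cats0 // => /eqP ->.
Qed.

Lemma agg_steps_widen n p q : agg_steps n p q -> agg_steps n.+1 p q.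
Proof.
elim=> [{}p {}q [lt_pn step]|{}p|p' q' r _ IHpq _ IHqr].
- by apply: rt_step; split=> //; apply: ltnW.
- exact: rt_refl.
- exact: rt_trans IHpq IHqr.
Qed.

Lemma agg_step_cons n x p q :
  A x -> agg_step n A p q -> agg_step n.+1 A (x :: p) (x :: q).
Proof.
move=> Ax [lt_pn [G [pG neG AG ->]]]; split=> //.
exists ([:: x] :: G); split=> //= [|g|g|]; rewrite ?inE.
- apply: (@perm_trans _ (x :: 1 :: p)); first by rewrite perm_cons.
  by rewrite (perm_catCA [:: x] [:: 1]).
- by case/orP=> [/eqP ->|/neG].
- by case/orP=> [/eqP -> /=|/AG]; rewrite ?addn0.
- by rewrite addn0.
Qed.

Lemma agg_steps_cons n x p q :
  A x -> agg_steps n p q -> agg_steps n.+1 (x :: p) (x :: q).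
Proof.
move=> Ax; elim=> [{}p {}q step|{}p|p' q' r _ IHpq _ IHqr].
- exact/rt_step/agg_step_cons.
- exact: rt_refl.
- exact: rt_trans IHpq IHqr.
Qed.

End Construction.

Definition rung (j : nat) : nat :=
  match j with 0 => 1 | 1 => 3 | k.+2 => 5 * 2 ^ k end.

Definition rung_succ (j : nat) : nat :=
  if j is k.+1 then rung k.+2 else 2.

Lemma sumn_ladder_rung k : (sumn (ladder rung k.+2)).+1 = 5 * 2 ^ k.
Proof. by elim: k => [|k /= IH] //; rewrite expnS; lia. Qed.

Lemma A_1235_rung j : A_1235 (rung j).
Proof.
by case: j => [|[|k]]; [left | right; right; left | right; right; right; exists k].
Qed.

Lemma rung_incr j : rung j <= rung j.+1.
Proof. by case: j => [|[|k]] //=; rewrite expnS; lia. Qed.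

Lemma rung_succ_least j x : A_1235 x -> rung j < x -> rung_succ j <= x.
Proof.
case=> [->|[->|[->|[i ->]]]]; case: j => [|[|k]] //=.
1-3: by have := expn_gt0 2 k; lia.
- by rewrite leq_pmul2l // expn_gt0.
- by rewrite ltn_pmul2l // leq_pmul2l // ltn_exp2l // leq_exp2l.
Qed.

Lemma rung_succ_gap j : sumn (ladder rung j) + rung j < rung_succ j.
Proof. by case: j => [|[|k]] //=; have := sumn_ladder_rung k; rewrite /= expnS; lia. Qed.

Lemma agg_steps_ladder k : agg_steps A_1235 k.+1 [::] (ladder rung k.+1).
Proof.
have A1 : A_1235 1 by left.
have A2 : A_1235 2 by right; left.
have A3 : A_1235 3 by right; right; left.
have first_tile : agg_steps A_1235 1 [::] [:: 1].
  exact/rt_step/agg_step_merge_all.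
elim: k => [//|[|k] IH].
- have merge2 p : size p < 2 -> A_1235 (sumn p).+1 ->
      agg_steps A_1235 2 p [:: (sumn p).+1].
    by move=> *; exact/rt_step/agg_step_merge_all.
  apply: rt_trans (merge2 [::] isT A1) _.
  apply: rt_trans (merge2 [:: 1] isT A2) _.
  apply: rt_trans (merge2 [:: 2] isT A3) _.
  exact: agg_steps_cons A3 first_tile.
- apply: rt_trans (agg_steps_widen IH) _.
  apply: rt_trans (agg_steps_cons (A_1235_rung k.+2) IH).
  apply/rt_step; rewrite -[[:: rung k.+2]]/[:: 5 * 2 ^ k] -sumn_ladder_rung.
  apply: agg_step_merge_all; first by rewrite size_ladder.
  by rewrite sumn_ladder_rung; exact: (A_1235_rung k.+2).
Qed.

Lemma sumn_ladder_rung_div n : sumn (ladder rung n.+1) = (5 * 2 ^ n.+1) %/ 4 - 1.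
Proof.
case: n => [//|k].
rewrite (_ : 5 * 2 ^ k.+2 = 5 * 2 ^ k * 4); last by rewrite !expnS; lia.
by rewrite mulnK // -sumn_ladder_rung subn1.
Qed.

Theorem mainTheorem14 (n : nat) : 1 <= n ->
  agg_Total_is n A_1235 ((5 * 2 ^ n) %/ 4 - 1).
Proof.
case: n => [//|n] _; rewrite -sumn_ladder_rung_div; split.
- apply: leq_sumn_agg_reachable; [by [] | exact: rung_incr
  | exact: rung_succ_least | exact: rung_succ_gap].
- exists (ladder rung n.+1); split=> //.
  exact: agg_reachable_steps (agg_reach_init _ _) (agg_steps_ladder n).
Qed.
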